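(* Consider the setting and algorithm described in the context, and assume: (A2) each $\mathcal{L}_j$ is differentiable with $\|\nabla\mathcal{L}_j(x)-\nabla\mathcal{L}_j(y)\|\le L\|x-y\|$ for all $x,y$; (A4-I) there are constants $\delta>0$ and $\tau\ge0$ with $\gamma(\rho)>3L+2L\delta\tau$ and $\rho>\frac{2L\tau}{\delta}$. Then for the iterates of EDANNI, for every $t\ge1$, with $\Delta^{(t)}:=x^{t+1}-x^t$, $\frac{\rho}{2}\|x^{t+1}-x^t\|^2+h(x^{t+1})-\frac{\rho}{2}\|x^t-x^{t-1}\|^2-h(x^t)\le-\Big\langle\nabla\mathcal{L}_1(x^{t+1})+\frac1m\sum_{j=1}^m\nabla\mathcal{L}_j(x^{t_j})-\nabla\mathcal{L}_1(x^{t_1}),\,\Delta^{(t)}\Big\rangle-\frac{\gamma(\rho)}{2}\|\Delta^{(t)}\|^2-\frac{\rho}{2}\|\Delta^{(t-1)}\|^2.$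
   Context: Problem setting: integers $m\ge 2$, $n\ge1$, $p\ge1$. For $j\in[m]$, $i\in[n]$, $l_{ji}:\mathbb{R}^p\to\mathbb{R}$ are smooth (possibly nonconvex) loss functions, and $h:\mathbb{R}^p\to\mathbb{R}\cup\{+\infty\}$ is proper, lower semicontinuous and convex. Let $\mathcal{L}_j(x)=\frac1n\sum_{i\in[n]}l_{ji}(x)$. Machine $1$ is the master. Algorithm EDANNI: given $x^0$ and $\rho\ge0$, at each iteration $t=0,1,\dots$ there is a set $\mathcal{A}_t\subseteq[m]$ of machines whose gradients arrive at iteration $t$, with $\mathcal{A}_0=[m]$; $t_j$ is the latest iteration $s\le t$ with $j\in\mathcal{A}_s$ (with $t_1=t$). The master updates $x^{t+1}=\arg\min_{x}\ \mathcal{L}_1(x)+h(x)+\frac{\rho}{2}\|x-x^t\|^2+\Big\langle \frac1m\sum_{j\in[m]}\nabla\mathcal{L}_j(x^{t_j})-\nabla\mathcal{L}_1(x^{t_1}),\,x-x^t\Big\rangle.$ $\gamma(\rho)$ denotes the convex (strong convexity) modulus of $x\mapsto h(x)+\frac{\rho}{2}\|x-x^t\|^2$. *)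

From HB Require Import structures.
From mathcomp Require Import all_boot all_order all_algebra.
From mathcomp Require Import all_classical all_reals all_analysis.
Set Implicit Arguments. Unset Strict Implicit. Unset Printing Implicit Defensive.
Import Order.TTheory GRing.Theory Num.Theory.
Import numFieldNormedType.Exports.
Local Open Scope ring_scope.

Section EDANNI.
Context {R : realType} {p : nat}.

Definition dotp (u v : 'rV[R]_p) : R := \sum_(k < p) u 0 k * v 0 k.
Definition sqnorm (u : 'rV[R]_p) : R := dotp u u.
Definition enorm (u : 'rV[R]_p) : R := Num.sqrt (sqnorm u).

Definition grad (f : 'rV[R]_p -> R) (x : 'rV[R]_p) : 'rV[R]_p :=
  \row_(k < p) ('D_(delta_mx 0 k) f x).

(* L_j(x) = (1/n) sum_{i in [n]} l_{ji}(x);  machines/samples 0-indexed. *)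
Definition Lavg (n : nat) (l : nat -> nat -> 'rV[R]_p -> R) (j : nat)
  (x : 'rV[R]_p) : R := n%:R^-1 * \sum_(i < n) l j i x.

Definition econvex (h : 'rV[R]_p -> \bar R) : Prop :=
  forall (x y : 'rV[R]_p) (lam : R), 0 <= lam <= 1 ->
    (h (lam *: x + (1 - lam) *: y)%R <= lam%:E * h x + (1 - lam)%:E * h y)%E.

Definition eproper (h : 'rV[R]_p -> \bar R) : Prop :=
  (forall x, h x != -oo%E) /\ exists x, h x \is a fin_num.

Definition strongly_convex_mod (phi : 'rV[R]_p -> \bar R) (g : R) : Prop :=
  forall (x y : 'rV[R]_p) (lam : R), 0 <= lam <= 1 ->
    (phi (lam *: x + (1 - lam) *: y)%R
      <= lam%:E * phi x + (1 - lam)%:E * phi y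
         - (g / 2 * lam * (1 - lam) * sqnorm (x - y))%:E)%E.

Definition hprox (h : 'rV[R]_p -> \bar R) (rho : R) (c : 'rV[R]_p) :=
  fun x => (h x + (rho / 2 * sqnorm (x - c))%:E)%E.

(* gamma(rho): the strong convexity modulus of x |-> h(x)+rho/2||x-x^t||^2
   (valid for every centre, and the largest such). *)
Definition is_sc_modulus (h : 'rV[R]_p -> \bar R) (rho g : R) : Prop :=
  (forall c, strongly_convex_mod (hprox h rho c) g) /\
  (forall g', (forall c, strongly_convex_mod (hprox h rho c) g') -> g' <= g).

(* Latest iteration s <= t with j in A_s (0 if none, consistent with A_0=[m]). *)
Fixpoint latest (A : nat -> nat -> bool) (j : nat) (t : nat) : nat :=
  match t with
  | 0 => 0
  | s.+1 => if A s.+1 j then s.+1 else latest A j s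
  end.

(* t_j at iteration t; the master is machine index 0 (machine 1 of the paper),
   with t_1 = t. *)
Definition tdel (A : nat -> nat -> bool) (t j : nat) : nat :=
  if j == 0%N then t else latest A j t.

Definition corr (m : nat) (L : nat -> 'rV[R]_p -> R) (A : nat -> nat -> bool)
  (x : nat -> 'rV[R]_p) (t : nat) : 'rV[R]_p :=
  m%:R^-1 *: (\sum_(j < m) grad (L j) (x (tdel A t j)))
  - grad (L 0%N) (x (tdel A t 0%N)).

Definition edanni_obj (m : nat) (L : nat -> 'rV[R]_p -> R)
  (h : 'rV[R]_p -> \bar R) (rho : R) (A : nat -> nat -> bool)
  (x : nat -> 'rV[R]_p) (t : nat) (z : 'rV[R]_p) : \bar R :=
  ((L 0%N z + rho / 2 * sqnorm (z - x t) + dotp (corr m L A x t) (z - x t))%:E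
   + h z)%E.

End EDANNI.

Set Warnings "-notation-overridden,-ambiguous-paths,-notation-incompatible-prefix".
From HB Require Import structures.
From mathcomp Require Import all_boot all_order all_algebra.
From mathcomp Require Import all_classical all_reals all_analysis.
From mathcomp Require Import ring lra.
Import Order.TTheory GRing.Theory Num.Theory.
Import numFieldNormedType.Exports.
Local Open Scope ring_scope.
Local Open Scope classical_set_scope.

(* The inequality is the first-order optimality condition of the master
   subproblem.  Compare x^{t+1} with the points z = lam x^t + (1 - lam) x^{t+1}:
   minimality of x^{t+1} together with the gamma-strong convexity of
   h + rho/2 ||. - x^t||^2 bounds the difference quotient of L_1 at x^{t+1} in
   the direction x^t - x^{t+1} from below, and letting lam -> 0+ yields, with
   D = x^{t+1} - x^t and c the correction vector of the step,
     h(x^{t+1}) + rho/2 ||D||^2 - h(x^t) + <c, D> + gamma/2 ||D||^2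
       <= - <grad L_1(x^{t+1}), D>.
   The terms rho/2 ||x^t - x^{t-1}||^2 occur on both sides. *)

Lemma le_derive_from_quotients {R : realType} {V : normedModType R}
    {f : V -> R} {a v : V} {K : R} (c : R) :
  differentiable f a ->
  (forall lam : R, 0 < lam -> lam <= 1 ->
     K <= lam^-1 * (f (lam *: v + a) - f a) + c * lam) ->
  K <= 'D_v f a.
Proof.
move=> df Kle.
have quot_cvg : (fun lam : R => lam^-1 * (f (lam *: v + a) - f a) + c * lam)
    @ 0^'+ --> 'D_v f a + c * 0.
  apply: cvgD; first exact/cvg_dnbhs_at_right/diff_derivable.
  by apply: cvgM; [exact: cvg_cst | exact/cvg_at_right_filter/cvg_id].
rewrite mulr0 addr0 in quot_cvg.
apply: (cvgr_to_ge quot_cvg); near=> lam; apply: Kle.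
- by near: lam; exact: nbhs_right_gt.
- by near: lam; apply: nbhs_right_ltW; exact: ltr01.
Unshelve. all: by end_near.
Qed.

Section Euclidean.
Context {R : realType} {p : nat}.
Implicit Types (u v w : 'rV[R]_p) (f : 'rV[R]_p -> R).

Lemma dotpDl u v w : dotp (u + v) w = dotp u w + dotp v w.
Proof. by rewrite /dotp -big_split; apply: eq_bigr => k _; rewrite !mxE mulrDl. Qed.

Lemma dotpZr u v (k : R) : dotp u (k *: v) = k * dotp u v.
Proof. by rewrite /dotp mulr_sumr; apply: eq_bigr => k' _; rewrite !mxE mulrCA. Qed.

Lemma dotpDr u v w : dotp u (v + w) = dotp u v + dotp u w.
Proof. by rewrite /dotp -big_split; apply: eq_bigr => k _; rewrite !mxE mulrDr. Qed.

Lemma dotpNr u v : dotp u (- v) = - dotp u v.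
Proof. by rewrite -scaleN1r dotpZr mulN1r. Qed.

Lemma sqnorm0 : sqnorm (0 : 'rV[R]_p) = 0.
Proof. by rewrite /sqnorm /dotp big1 // => k _; rewrite mxE mul0r. Qed.

Lemma sqnormN u : sqnorm (- u) = sqnorm u.
Proof. by rewrite /sqnorm /dotp; apply: eq_bigr => k _; rewrite mxE mulrNN. Qed.

Lemma derive_grad f a v : differentiable f a -> 'D_v f a = dotp (grad f a) v.
Proof.
move=> df; rewrite deriveE // [in LHS](row_sum_delta v) linear_sum.
by apply: eq_bigr => k _; rewrite linearZ /= mxE -deriveE // mulrC.
Qed.

Lemma differentiable_Lavg n (l : nat -> nat -> 'rV[R]_p -> R) j a :
  (forall i, differentiable (l j i) a) -> differentiable (Lavg n l j) a.
Proof.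
move=> dl; have -> : Lavg n l j = n%:R^-1 *: \sum_(i < n) l j i.
  by apply/funext => z; rewrite /Lavg /= fct_sumE.
by apply/differentiableZ/differentiable_sum => i; exact: dl.
Qed.

Lemma strongly_convex_minimizer_variational {f} {phi : 'rV[R]_p -> \bar R}
    {c x0 x1 y : 'rV[R]_p} {g a b : R} :
  differentiable f x1 -> strongly_convex_mod phi g ->
  (forall z, phi z != -oo%E) ->
  (forall z, ((f x1 + dotp c (x1 - x0))%:E + phi x1
              <= (f z + dotp c (z - x0))%:E + phi z)%E) ->
  phi x1 = a%:E -> phi y = b%:E ->
  a - b + dotp c (x1 - y) + g / 2 * sqnorm (y - x1) <= 'D_(y - x1) f x1.
Proof.
move=> df sc phi_nNy x1_min phi_x1 phi_y.
apply: (le_derive_from_quotients (g / 2 * sqnorm (y - x1)) df).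
move=> lam lam_gt0 lam_le1.
set z := lam *: (y - x1) + x1.
have zE : z = lam *: y + (1 - lam) *: x1.
  by apply/rowP => k; rewrite /z !mxE; ring.
have cz : dotp c (z - x0) = lam * dotp c (y - x1) + dotp c (x1 - x0).
  by rewrite /z -addrA [LHS]dotpDr dotpZr.
have := sc y x1 lam; rewrite -zE phi_x1 phi_y ltW //= => /(_ lam_le1) phi_z_le.
have [e phi_z] : exists e, phi z = e%:E.
  case: (phi z) (phi_nNy z) phi_z_le => [e _ _ | _ | //]; first by exists e.
  by rewrite -!EFinM -!EFinD leye_eq.
move: phi_z_le (x1_min z); rewrite phi_z phi_x1 cz.
rewrite -!EFinM -!EFinD !lee_fin => e_le min_z.
rewrite -(ler_pM2l lam_gt0) [X in _ <= X]mulrDr mulVKf ?gt_eqF //.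
set D := sqnorm (y - x1) in e_le *.
have -> : dotp c (x1 - y) = - dotp c (y - x1) by rewrite -dotpNr opprB.
nra.
Qed.

End Euclidean.

Lemma edanni_objE (R : realType) (p m : nat) (L : nat -> 'rV[R]_p -> R)
    (h : 'rV[R]_p -> \bar R) (rho : R) (A : nat -> nat -> bool)
    (x : nat -> 'rV[R]_p) (t : nat) (z : 'rV[R]_p) :
  edanni_obj m L h rho A x t z
  = ((L 0%N z + dotp (corr m L A x t) (z - x t))%:E + hprox h rho (x t) z)%E.
Proof.
rewrite /edanni_obj /hprox [RHS]addeCA -EFinD addeC.
by congr (_ + _)%E; congr (_%:E); ring.
Qed.

Theorem lemma1 (R : realType) (m n p : nat)
  (l : nat -> nat -> 'rV[R]_p -> R) (h : 'rV[R]_p -> \bar R)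
  (A : nat -> nat -> bool) (x : nat -> 'rV[R]_p)
  (rho gamma Lc delta tau : R) :
  (2 <= m)%N -> (1 <= n)%N -> (1 <= p)%N ->
  (* smooth losses *)
  (forall j i (y : 'rV[R]_p), differentiable (l j i) y) ->
  (* h proper, lower semicontinuous, convex *)
  eproper h -> lower_semicontinuous h -> econvex h ->
  0 <= rho ->
  is_sc_modulus h rho gamma ->
  (* A_0 = [m] *)
  (forall j, (j < m)%N -> A 0%N j) ->
  (* EDANNI iterates: x^{t+1} is a minimizer of the master objective *)
  (forall t (z : 'rV[R]_p),
     (edanni_obj m (Lavg n l) h rho A x t (x t.+1)
      <= edanni_obj m (Lavg n l) h rho A x t z)%E) ->
  (* (A2) *)
  (forall j (y z : 'rV[R]_p), (j < m)%N ->
     enorm (grad (Lavg n l j) y - grad (Lavg n l j) z) <= Lc * enorm (y - z)) ->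
  (* (A4-I) *)
  0 < delta -> 0 <= tau ->
  gamma > 3 * Lc + 2 * Lc * delta * tau ->
  rho > 2 * Lc * tau / delta ->
  forall t, (1 <= t)%N ->
    ((rho / 2 * sqnorm (x t.+1 - x t))%:E + h (x t.+1)
     - (rho / 2 * sqnorm (x t - x t.-1))%:E - h (x t)
     <= (- dotp (grad (Lavg n l 0%N) (x t.+1) + corr m (Lavg n l) A x t)
                (x t.+1 - x t)
         - gamma / 2 * sqnorm (x t.+1 - x t)
         - rho / 2 * sqnorm (x t - x t.-1))%:E)%E.
Proof.
move=> _ _ _ dl [h_nNy [z0 h_z0]] _ _ _ [sc _] _ x_min _ _ _ _ _ t _.
set L0 := Lavg n l 0%N; set c := corr m (Lavg n l) A x t.
have dL0 : differentiable L0 (x t.+1) by apply: differentiable_Lavg.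
have x1_min z : ((L0 (x t.+1) + dotp c (x t.+1 - x t))%:E
    + hprox h rho (x t) (x t.+1)
    <= (L0 z + dotp c (z - x t))%:E + hprox h rho (x t) z)%E.
  by rewrite -!edanni_objE; exact: x_min.
have [a h_x1] : exists a, h (x t.+1) = a%:E.
  move: (h_nNy (x t.+1)) (x1_min z0); rewrite /hprox.
  case: (h (x t.+1)) => [a _ _| _ |]; [by exists a | | by []].
  by case: (h z0) h_z0 => // r _; rewrite !addye.
rewrite h_x1; case h_x0 : (h (x t)) => [b | | ]; last 2 first.
- by rewrite -!EFinN -!EFinD /= addeNy leNye.
- by move: (h_nNy (x t)); rewrite h_x0.
have hp_nNy z : hprox h rho (x t) z != -oo%E.
  by rewrite /hprox; case: (h z) (h_nNy z).
have hp_x1 : hprox h rho (x t) (x t.+1) = (a + rho / 2 * sqnorm (x t.+1 - x t))%:E.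
  by rewrite /hprox h_x1.
have hp_x0 : hprox h rho (x t) (x t) = b%:E.
  by rewrite /hprox h_x0 subrr sqnorm0 mulr0 adde0.
have := strongly_convex_minimizer_variational
  dL0 (sc (x t)) hp_nNy x1_min hp_x1 hp_x0.
have -> : x t - x t.+1 = - (x t.+1 - x t) by rewrite opprB.
rewrite derive_grad // dotpNr sqnormN => first_order.
rewrite -!EFinN -!EFinD lee_fin dotpDl.
by clear -first_order; lra.
Qed.
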